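(* Let $I$ and $\tilde I$ be closed arcs of $\mathbb{T}$ with dyadic endpoints, and let $\xi\colon I\to\tilde I$ be a map onto $\tilde I$ that is linear in the angular coordinate with slope an integer power of $2$. Then $\xi$ belongs to the pseudo-group $\Upsilon_g$, i.e., there exist $m,n\in\mathbb{N}_0$ with $g^m\circ\xi=g^n$ on $I$.
   Context: $\mathbb{T}$ is the unit circle with angular coordinate $\theta\in\mathbb{R}/\mathbb{Z}$ (points $e^{2\pi i\theta}$); dyadic points are those with $\theta=k/2^j$. $g(z)=z^2$ is the doubling map $\theta\mapsto2\theta$ of $\mathbb{T}$. $\Upsilon_g$ denotes the collection of homeomorphisms $\xi\colon I\to\tilde I$ between arcs of $\mathbb{T}$ of the form $\xi=g^{-m}\circ g^n$ for some $m,n\in\mathbb{N}_0$, meaning that $\xi$ is a continuous lift of $g^n|_I$ under $g^m$, i.e., $g^m\circ\xi=g^n$ on $I$; such maps are linear in $\theta$ with slope $2^{n-m}$. *)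

(* the circle T = R/Z is modelled through lifts to R. *)
From Stdlib Require Export Reals ZArith.
Open Scope R_scope.

Definition circ_eq (x y : R) : Prop := exists z : Z, x - y = IZR z.

Definition dyadic (x : R) : Prop := exists (p : Z) (j : nat), x = IZR p / 2 ^ j.

Definition on_arc (a L theta : R) : Prop :=
  exists u : R, a <= u <= a + L /\ circ_eq theta u.

Definition dyadic_arc (a L : R) : Prop :=
  0 < L < 1 /\ dyadic a /\ dyadic (a + L).

(* An increasing affine lift t |-> 2^k t + c of a map from I onto Itilde must
   send the left endpoint of I to the left endpoint of Itilde: otherwise points
   of I just left of the preimage of b would land just left of b, outside the
   proper arc Itilde.  Hence c is congruent mod 1 to b - 2^k a, a dyadic number.
   Multiplying by 2^m with m large clears the denominator of c and makes the
   slope 2^(m+k) a nonnegative power of 2, so 2^m xi(t) = 2^n t mod 1. *)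

From Stdlib Require Import Lra Lia.

Lemma IZR_not_in_0_1 (z : Z) : 0 < IZR z < 1 -> False.
Proof. intros [H0 H1]. apply lt_IZR in H0. apply lt_IZR in H1. lia. Qed.

Lemma pow2_IZR (n : nat) : 2 ^ n = IZR (2 ^ Z.of_nat n).
Proof. now rewrite <- pow_IZR. Qed.

Lemma pow2_mult_powerRZ (m : nat) (k : Z) :
  (0 <= Z.of_nat m + k)%Z ->
  2 ^ m * powerRZ 2 k = 2 ^ Z.to_nat (Z.of_nat m + k).
Proof.
  intros Hmk.
  rewrite !pow_powerRZ, <- powerRZ_add by lra.
  f_equal. lia.
Qed.

Lemma dyadic_IZR (z : Z) : dyadic (IZR z).
Proof. exists z, 0%nat. simpl. lra. Qed.

Lemma dyadic_add (x y : R) : dyadic x -> dyadic y -> dyadic (x + y).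
Proof.
  intros [p [i ->]] [q [j ->]].
  exists (p * 2 ^ Z.of_nat j + q * 2 ^ Z.of_nat i)%Z, (i + j)%nat.
  rewrite plus_IZR, !mult_IZR, <- !pow2_IZR, pow_add.
  assert (0 < 2 ^ i) by (apply pow_lt; lra).
  assert (0 < 2 ^ j) by (apply pow_lt; lra).
  field. lra.
Qed.

Lemma dyadic_opp (x : R) : dyadic x -> dyadic (- x).
Proof.
  intros [p [i ->]]. exists (- p)%Z, i.
  rewrite opp_IZR. unfold Rdiv. ring.
Qed.

Lemma dyadic_sub (x y : R) : dyadic x -> dyadic y -> dyadic (x - y).
Proof. intros Hx Hy. apply dyadic_add; [exact Hx | now apply dyadic_opp]. Qed.

Lemma dyadic_powerRZ2_mult (k : Z) (x : R) : dyadic x -> dyadic (powerRZ 2 k * x).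
Proof.
  intros [p [i ->]].
  destruct (Z_le_gt_dec 0 k) as [Hk | Hk].
  - exists (2 ^ k * p)%Z, i.
    rewrite mult_IZR, <- (Z2Nat.id k) by exact Hk.
    rewrite <- pow2_IZR, <- pow_powerRZ.
    unfold Rdiv. ring.
  - set (K := Z.to_nat (- k)).
    exists p, (i + K)%nat.
    assert (HK : k = (- Z.of_nat K)%Z) by lia.
    rewrite HK, powerRZ_neg', <- pow_powerRZ, pow_add.
    assert (0 < 2 ^ i) by (apply pow_lt; lra).
    assert (0 < 2 ^ K) by (apply pow_lt; lra).
    field. lra.
Qed.

Lemma dyadic_circ_eq (x y : R) : circ_eq x y -> dyadic y -> dyadic x.
Proof.
  intros [z Hz] Hy.
  replace x with (y + IZR z) by lra.
  apply dyadic_add; [exact Hy | apply dyadic_IZR].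
Qed.

Lemma onto_arc_left_endpoint (a L b L' P c : R) (xi : R -> R) :
  0 < P -> 0 <= L' < 1 ->
  (forall t, a <= t <= a + L -> xi t = P * t + c) ->
  (forall t, a <= t <= a + L -> on_arc b L' (xi t)) ->
  (forall theta, on_arc b L' theta ->
     exists t, a <= t <= a + L /\ circ_eq (xi t) theta) ->
  circ_eq (P * a + c) b.
Proof.
  intros HP HL' Hxi Hinto Honto.
  destruct (Honto b) as [t0 [Ht0 [z0 Hz0]]].
  { exists b. split; [lra |]. exists 0%Z. simpl. lra. }
  rewrite Hxi in Hz0 by exact Ht0.
  destruct (Rle_lt_or_eq_dec a t0 (proj1 Ht0)) as [Hlt | <-].
  2: { exists z0. exact Hz0. }
  exfalso.
  set (d := Rmin (t0 - a) ((1 - L') / (2 * P))).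
  assert (Hd_pos : 0 < d).
  { apply Rmin_glb_lt; [lra |]. apply Rdiv_lt_0_compat; lra. }
  assert (Hd_in : d <= t0 - a) by apply Rmin_l.
  assert (HPd : P * d <= (1 - L') / 2).
  { replace ((1 - L') / 2) with (P * ((1 - L') / (2 * P))) by (field; lra).
    apply Rmult_le_compat_l; [lra | apply Rmin_r]. }
  destruct (Hinto (t0 - d)) as [u [Hu [z1 Hz1]]]; [lra |].
  rewrite Hxi in Hz1 by lra.
  (* xi (t0 - d) lies P d to the left of b mod 1, yet must lie in [b, b + L'] mod 1 *)
  apply (IZR_not_in_0_1 (z0 - z1)).
  rewrite minus_IZR. nra.
Qed.

Lemma affine_dyadic_offset_doubling (k : Z) (c : R) :
  dyadic c ->
  exists m n : nat, forall t, circ_eq (2 ^ m * (powerRZ 2 k * t + c)) (2 ^ n * t).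
Proof.
  intros [p [j ->]].
  set (K := Z.abs_nat k).
  exists (j + K)%nat, (Z.to_nat (Z.of_nat (j + K) + k)).
  intros t.
  rewrite <- pow2_mult_powerRZ by lia.
  exists (p * 2 ^ Z.of_nat K)%Z.
  rewrite mult_IZR, <- pow2_IZR, pow_add.
  assert (0 < 2 ^ j) by (apply pow_lt; lra).
  field. lra.
Qed.

Theorem lemma5p2 (a L b L' : R) (xi : R -> R) (k : Z) (c : R) :
  dyadic_arc a L ->
  dyadic_arc b L' ->
  (forall t, a <= t <= a + L -> xi t = powerRZ 2 k * t + c) ->
  (forall t, a <= t <= a + L -> on_arc b L' (xi t)) ->
  (forall theta, on_arc b L' theta ->
     exists t, a <= t <= a + L /\ circ_eq (xi t) theta) ->
  exists m n : nat, forall t, a <= t <= a + L ->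
    circ_eq (2 ^ m * xi t) (2 ^ n * t).
Proof.
  intros [_ [Ha _]] [HL' [Hb _]] Hxi Hinto Honto.
  assert (Hslope : 0 < powerRZ 2 k) by (apply powerRZ_lt; lra).
  assert (Hleft : circ_eq (powerRZ 2 k * a + c) b).
  { apply (onto_arc_left_endpoint a L b L' _ c xi); auto. lra. }
  assert (Hc : dyadic c).
  { replace c with ((powerRZ 2 k * a + c) - powerRZ 2 k * a) by ring.
    apply dyadic_sub.
    - exact (dyadic_circ_eq _ _ Hleft Hb).
    - now apply dyadic_powerRZ2_mult. }
  destruct (affine_dyadic_offset_doubling k c Hc) as [m [n Hmn]].
  exists m, n. intros t Ht.
  rewrite Hxi by exact Ht.
  apply Hmn.
Qed.
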